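(* Let $x\in\mathcal H$, $\lambda>0$, $\hat\sigma\ge0$, and let $(y,u,\varepsilon)$ be a $\hat\sigma$-approximate PG solution at $(x,\lambda)$. Define $v:=u+\nabla g(y)$ and $\sigma:=\frac{\lambda L}{\sqrt{1+\lambda\mu}}+\hat\sigma$. Then $v\in\partial_\varepsilon f(y)+\nabla g(y)$ and $\frac{\|\lambda v+y-x\|^2}{1+\lambda\mu}+2\lambda\varepsilon\le\sigma^2\|y-x\|^2$.
   Context: $\mathcal H$ is a finite-dimensional real inner product space with norm $\|\cdot\|$. $f,g:\mathcal H\to(-\infty,\infty]$ are proper, closed, convex; $g$ is $\mu$-strongly convex ($\mu>0$). $\Omega\subseteq\mathcal H$ is a nonempty closed convex set containing $\mathrm{dom}\,f$, $P_\Omega$ is the orthogonal projection onto $\Omega$, and $g$ is differentiable on an open set containing $\Omega$ with $\|\nabla g(x)-\nabla g(y)\|\le L\|x-y\|$ for $x,y\in\Omega$, $L>0$. For $\varepsilon\ge0$, $\partial_\varepsilon f(y):=\{u: f(w)\ge f(y)+\langle u,w-y\rangle-\varepsilon\ \forall w\}$. Definition: for $\hat\sigma\ge0$, $(y,u,\varepsilon)\in\mathcal H\times\mathcal H\times[0,\infty)$ is a $\hat\sigma$-approximate Proximal-Gradient (PG) solution at $(x,\lambda)\in\mathcal H\times(0,\infty)$ if, with $z:=P_\Omega(x)$, $u\in\partial_\varepsilon f(y)$ and $\frac{\|\lambda(u+\nabla g(z))+y-x\|^2}{1+\lambda\mu}+2\lambda\varepsilon\le\hat\sigma^2\|y-x\|^2$.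 *)

(* The finite-dimensional real inner product space H is modelled as 'rV[R]_n
   with the standard (Euclidean) inner product. *)
From HB Require Import structures.
From mathcomp Require Import all_boot all_order all_algebra.
From mathcomp Require Import all_classical all_reals all_analysis.
Set Implicit Arguments. Unset Strict Implicit. Unset Printing Implicit Defensive.
Import Order.TTheory GRing.Theory Num.Theory.
Import numFieldNormedType.Exports.
Local Open Scope classical_set_scope.
Local Open Scope ring_scope.

Section Defs.
Context {R : realType} {n : nat}.
Local Notation H := 'rV[R]_n.

Definition ip (a b : H) : R := \sum_(i < n) a ord0 i * b ord0 i.
Definition enorm (a : H) : R := Num.sqrt (ip a a).

Definition proper_fun (f : H -> \bar R) : Prop :=
  (forall x, f x != -oo%E) /\ exists x, f x \is a fin_num.

Definition closed_fun (f : H -> \bar R) : Prop :=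
  closed [set p : H * R | (f p.1 <= p.2%:E)%E].

Definition convex_fun (f : H -> \bar R) : Prop :=
  forall (x y : H) (t : R), 0 < t < 1 ->
    (f (t *: x + (1 - t) *: y)%R <= t%:E * f x + (1 - t)%:E * f y)%E.

Definition strongly_convex_fun (mu : R) (f : H -> \bar R) : Prop :=
  forall (x y : H) (t : R), 0 < t < 1 ->
    (f (t *: x + (1 - t) *: y)%R <=
       t%:E * f x + (1 - t)%:E * f y
       - (mu / 2 * t * (1 - t) * enorm (x - y) ^+ 2)%:E)%E.

Definition dom (f : H -> \bar R) : set H := [set x | (f x < +oo)%E].

Definition gradient_on (g : H -> \bar R) (U : set H) (Gr : H -> H) : Prop :=
  forall x, U x -> g x \is a fin_num /\
    forall e : R, 0 < e -> exists2 d : R, 0 < d & forall h : H, enorm h < d ->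
      `| fine (g (x + h)) - fine (g x) - ip (Gr x) h | <= e * enorm h.

Definition is_proj (S : set H) (x p : H) : Prop :=
  S p /\ forall w, S w -> enorm (x - p) <= enorm (x - w).

Definition eps_subdiff (f : H -> \bar R) (eps : R) (y u : H) : Prop :=
  forall w, (f w >= f y + (ip u (w - y)%R - eps)%:E)%E.

(* hat-sigma-approximate PG solution (y,u,eps) at (x,lam), with z := P x,
   where Gr is the gradient of g and mu its strong-convexity modulus *)
Definition approx_PG_sol (f : H -> \bar R) (Gr P : H -> H) (mu sigh : R)
    (x : H) (lam : R) (y u : H) (eps : R) : Prop :=
  0 <= eps /\ eps_subdiff f eps y u /\
  enorm (lam *: (u + Gr (P x)) + y - x) ^+ 2 / (1 + lam * mu) + 2 * lam * eps
    <= sigh ^+ 2 * enorm (y - x) ^+ 2.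

End Defs.

(* The proof combines three independent facts, preceded by two elementary
   lemmas on real quadratics that drive the inner-product estimates.
   - Geometry of the Euclidean inner product on 'rV[R]_n: bilinearity,
     Cauchy-Schwarz and the triangle inequality for the induced norm.
   - Projection onto a closed convex set is nonexpansive towards points of
     the set: the variational inequality <x - p, y - p> <= 0 for y in Omega
     gives |y - P x| <= |y - x|.
   - The point y lies in dom f (being a point of an eps-subdifferential of a
     proper function), hence in Omega, so the Lipschitz bound applies:
     |grad g(y) - grad g(z)| <= L |y - z| <= L |y - x|.
   Writing lam v + y - x = (lam (u + grad g(z)) + y - x) + lam (grad g(y) -
   grad g(z)) and applying the triangle inequality, the theorem reduces to an
   elementary real inequality, [error_bound_transfer]. *)
From HB Require Import structures.
From mathcomp Require Import all_boot all_order all_algebra.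
From mathcomp Require Import all_classical all_reals all_analysis.
From mathcomp Require Import ring lra.
Import Order.TTheory GRing.Theory Num.Theory.
Import numFieldNormedType.Exports.
Local Open Scope classical_set_scope.
Local Open Scope ring_scope.

Lemma quadratic_discriminant {R : realFieldType} (A B C : R) :
  0 <= B -> (forall t, 0 <= A + 2 * t * C + t ^+ 2 * B) -> C ^+ 2 <= A * B.
Proof.
move=> B0 nonneg; have [Bz|Bn0] := eqVneq B 0.
  have [C0|Cn0] := eqVneq C 0; first by rewrite Bz C0 expr0n /= mulr0.
  have := nonneg (- (A + 1) / (2 * C)); set t := _ / _.
  have tC : t * (2 * C) = - (A + 1) by rewrite mulfVK ?mulf_neq0 ?pnatr_eq0.
  by rewrite Bz mulr0 addr0; lra.
have := nonneg (- C / B); set t := _ / _ => h.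
have tB : t * B = - C by rewrite mulfVK.
have : 0 <= (A + 2 * t * C + t ^+ 2 * B) * B by rewrite mulr_ge0.
have -> : (A + 2 * t * C + t ^+ 2 * B) * B =
          A * B + 2 * C * (t * B) + (t * B) ^+ 2 by ring.
by rewrite tB; lra.
Qed.

(* If t a <= t^2 b for all t in ]0, 1[, then a <= 0 (divide by t and let
   t -> 0); the explicit witness t = a / (2 a + b) refutes a > 0. *)
Lemma le0_of_small_quadratic {R : realFieldType} (a b : R) :
  0 <= b -> (forall t, 0 < t < 1 -> t * a <= t ^+ 2 * b) -> a <= 0.
Proof.
move=> b0 small; rewrite leNgt; apply/negP => a0.
have c0 : 0 < 2 * a + b by lra.
have t0 : 0 < a / (2 * a + b) by rewrite divr_gt0.
have t1 : a / (2 * a + b) < 1 by rewrite ltr_pdivrMr // mul1r; lra.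
have := small _ (introT andP (conj t0 t1)).
move: t0 t1; set t := a / _ => t0 t1.
have tc : t * (2 * a + b) = a by rewrite mulfVK ?gt_eqF.
rewrite expr2 -mulrA ler_pM2l // => h.
have : a * (2 * a + b) <= (t * b) * (2 * a + b) by rewrite ler_pM2r.
have -> : t * b * (2 * a + b) = b * (t * (2 * a + b)) by ring.
by rewrite tc; nra.
Qed.

Section EuclideanGeometry.
Context {R : realType} {n : nat}.
Implicit Types (a b c : 'rV[R]_n) (k : R).

Lemma ipC a b : ip a b = ip b a.
Proof. by apply: eq_bigr => i _; rewrite mulrC. Qed.

Lemma ipDl a b c : ip (a + b) c = ip a c + ip b c.
Proof. by rewrite /ip -big_split; apply: eq_bigr => i _; rewrite mxE mulrDl. Qed.

Lemma ipZl k a b : ip (k *: a) b = k * ip a b.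
Proof. by rewrite /ip mulr_sumr; apply: eq_bigr => i _; rewrite mxE mulrA. Qed.

Lemma ipDr a b c : ip c (a + b) = ip c a + ip c b.
Proof. by rewrite ipC ipDl !(ipC c). Qed.

Lemma ipZr k a b : ip b (k *: a) = k * ip b a.
Proof. by rewrite ipC ipZl ipC. Qed.

Lemma ip_ge0 a : 0 <= ip a a.
Proof. by apply: sumr_ge0 => i _; rewrite -expr2 sqr_ge0. Qed.

Lemma enorm_ge0 a : 0 <= enorm a.
Proof. exact: sqrtr_ge0. Qed.

Lemma enorm2 a : enorm a ^+ 2 = ip a a.
Proof. by rewrite /enorm sqr_sqrtr // ip_ge0. Qed.

Lemma enormZ k a : enorm (k *: a) = `|k| * enorm a.
Proof. by rewrite /enorm ipZl ipZr mulrA -expr2 sqrtrM ?sqr_ge0 // sqrtr_sqr. Qed.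

Lemma ip_expand a b k :
  ip (a + k *: b) (a + k *: b) = ip a a + 2 * k * ip a b + k ^+ 2 * ip b b.
Proof. by rewrite !(ipDl, ipDr, ipZl, ipZr) (ipC b a); ring. Qed.

(* Cauchy-Schwarz: t |-> |a + t b|^2 is a nonnegative quadratic. *)
Lemma cauchy_schwarz a b : ip a b ^+ 2 <= ip a a * ip b b.
Proof.
by apply: quadratic_discriminant (ip_ge0 b) _ => t; rewrite -ip_expand ip_ge0.
Qed.

(* Triangle inequality, from Cauchy-Schwarz by squaring both sides. *)
Lemma enorm_triangle a b : enorm (a + b) <= enorm a + enorm b.
Proof.
rewrite -(ler_pXn2r (_ : 0 < 2)%N) ?nnegrE ?addr_ge0 ?enorm_ge0 //.
have ab : ip a b <= enorm a * enorm b.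
  apply: le_trans (ler_norm _) _.
  rewrite -(ler_pXn2r (_ : 0 < 2)%N) ?nnegrE ?mulr_ge0 ?enorm_ge0 //.
  by rewrite real_normK ?num_real // exprMn !enorm2 cauchy_schwarz.
have := ip_expand a b 1; rewrite scale1r sqrrD !enorm2 => ->; lra.
Qed.

End EuclideanGeometry.

Section Projection.
Context {R : realType} {n : nat}.
Context {S : set 'rV[R]_n} {x p : 'rV[R]_n}.
Hypotheses (convS : convex_set S) (proj_p : is_proj S x p).

Lemma proj_variational_ineq {y} : S y -> ip (x - p) (y - p) <= 0.
Proof.
move=> Sy; have [Sp nearest] := proj_p.
suff : 2 * ip (x - p) (y - p) <= 0 by lra.
apply: (@le0_of_small_quadratic R _ _ (ip_ge0 (y - p))) => t /andP[t0 t1].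
have Sw : S (t *: y + (1 - t) *: p).
  have := convS y p (Itv01 (ltW t0) (ltW t1)); rewrite !inE /= => /(_ Sy Sp).
  by rewrite /conv.
have closer :
    enorm (x - p) ^+ 2 <= enorm ((x - p) + (- t) *: (y - p)) ^+ 2.
  rewrite ler_pXn2r ?nnegrE ?enorm_ge0 //.
  have -> : (x - p) + (- t) *: (y - p) = x - (t *: y + (1 - t) *: p).
    by apply/rowP => i; rewrite !mxE; ring.
  exact: nearest.
by move: closer; rewrite !enorm2 ip_expand sqrrN; lra.
Qed.

Lemma proj_closer {y} : S y -> enorm (y - p) <= enorm (y - x).
Proof.
move=> Sy; rewrite -(ler_pXn2r (_ : 0 < 2)%N) ?nnegrE ?enorm_ge0 // !enorm2.
have -> : y - x = (y - p) + (-1) *: (x - p) by apply/rowP => i; rewrite !mxE; ring.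
rewrite ip_expand (ipC (y - p)).
have := proj_variational_ineq Sy; have := ip_ge0 (x - p); lra.
Qed.

End Projection.

(* A point of an eps-subdifferential of a proper function lies in its domain:
   otherwise the subgradient inequality would force f = +oo everywhere. *)
Lemma eps_subdiff_dom {R : realType} {n : nat} {f : 'rV[R]_n -> \bar R}
    {eps : R} {y u : 'rV[R]_n} :
  proper_fun f -> eps_subdiff f eps y u -> dom f y.
Proof.
move=> [not_ninfty [x0 fx0]] sub; rewrite /dom /=.
have := sub x0; case fy: (f y) => [r| |] /=.
- by move=> _; exact: ltry.
- by rewrite leye_eq => /eqP fx0_infty; move: fx0; rewrite fx0_infty.
- by move: (not_ninfty y); rewrite fy.
Qed.

Lemma perturbed_error_bound {R : realFieldType} {a m k e N : R} :
  0 <= a -> 0 <= m -> 0 <= k -> 0 <= e -> 0 <= N ->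
  a ^+ 2 + e <= k ^+ 2 -> N <= a + m -> N ^+ 2 + e <= (m + k) ^+ 2.
Proof.
move=> a0 m0 k0 e0 N0 old new.
have ak : a <= k by rewrite -(ler_pXn2r (_ : 0 < 2)%N) ?nnegrE //; lra.
nra.
Qed.

(* The same estimate in the scaled form used by approximate PG solutions:
   errors are divided by q = 1 + lam mu, and the perturbation is K D. *)
Lemma error_bound_transfer {R : rcfType} {q A N K D sh e : R} :
  0 < q -> 0 <= A -> 0 <= N -> 0 <= K -> 0 <= D -> 0 <= sh -> 0 <= e ->
  A ^+ 2 / q + e <= sh ^+ 2 * D ^+ 2 -> N <= A + K * D ->
  N ^+ 2 / q + e <= (K / Num.sqrt q + sh) ^+ 2 * D ^+ 2.
Proof.
move=> q0 A0 N0 K0 D0 sh0 e0 old new.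
have s0 : 0 < Num.sqrt q by rewrite sqrtr_gt0.
have qs : q = Num.sqrt q ^+ 2 by rewrite sqr_sqrtr // ltW.
move: s0 qs old; set s := Num.sqrt q => s0 ->.
rewrite -!expr_div_n -!exprMn mulrDl mulrAC => old.
apply: (perturbed_error_bound _ _ _ _ _ old);
  rewrite ?divr_ge0 ?mulr_ge0 ?(ltW s0) //.
by rewrite -mulrDl ler_pM2r ?invr_gt0.
Qed.

Theorem proposition5p1 (R : realType) (n : nat)
    (f g : 'rV[R]_n -> \bar R) (mu L : R) (Omega U : set 'rV[R]_n)
    (Gr P : 'rV[R]_n -> 'rV[R]_n) :
  proper_fun f -> closed_fun f -> convex_fun f ->
  proper_fun g -> closed_fun g -> convex_fun g ->
  0 < mu -> strongly_convex_fun mu g ->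
  Omega !=set0 -> closed Omega -> convex_set Omega ->
  dom f `<=` Omega ->
  (forall x, is_proj Omega x (P x)) ->
  open U -> Omega `<=` U -> gradient_on g U Gr ->
  0 < L -> (forall x y, Omega x -> Omega y -> enorm (Gr x - Gr y) <= L * enorm (x - y)) ->
  forall (x : 'rV[R]_n) (lam sigh : R) (y u : 'rV[R]_n) (eps : R),
    0 < lam -> 0 <= sigh ->
    approx_PG_sol f Gr P mu sigh x lam y u eps ->
    let v := u + Gr y in
    let sigma := lam * L / Num.sqrt (1 + lam * mu) + sigh in
    (exists2 w, eps_subdiff f eps y w & v = w + Gr y) /\
    enorm (lam *: v + y - x) ^+ 2 / (1 + lam * mu) + 2 * lam * eps
      <= sigma ^+ 2 * enorm (y - x) ^+ 2.
Proof.
move=> properf _ _ _ _ _ mu0 _ _ _ convO domO projP _ _ _ L0 lipG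
  x lam sigh y u eps lam0 sigh0 [eps0 [sub approx]] v sigma.
split; first by exists u.
set z := P x; set r := lam *: (u + Gr z) + y - x.
have Oy : Omega y := domO _ (eps_subdiff_dom properf sub).
have grad_close : enorm (Gr y - Gr z) <= L * enorm (y - x).
  apply: le_trans (lipG _ _ Oy (projP x).1) _.
  by rewrite ler_pM2l // (proj_closer convO (projP x) Oy).
have residual : enorm (lam *: v + y - x) <= enorm r + lam * L * enorm (y - x).
  have -> : lam *: v + y - x = r + lam *: (Gr y - Gr z).
    by apply/rowP => i; rewrite !mxE; ring.
  apply: le_trans (enorm_triangle _ _) _.
  by rewrite enormZ gtr0_norm // -mulrA lerD2l ler_pM2l.
have q0 : 0 < 1 + lam * mu by rewrite ltr_wpDr // mulr_ge0 ?ltW.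
have e0 : 0 <= 2 * lam * eps by rewrite !mulr_ge0 // ltW.
have K0 : 0 <= lam * L by rewrite mulr_ge0 // ltW.
exact: (error_bound_transfer q0 (enorm_ge0 _) (enorm_ge0 _) K0 (enorm_ge0 _)
  sigh0 e0 approx residual).
Qed.
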